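(* Let $n\ge1$, let $s_1,\dots,s_n\in\mathbb R$ be distinct, and let $a,\rho_0,S,K_j,M_j$ ($1\le j\le n$) be positive constants. For $\zeta\in\mathbb C\setminus i\mathbb R$ let $\Gamma(\zeta)$ be the $n\times n$ matrix $$\Gamma(\zeta)_{ij}=-\zeta\Big(\pm\frac{e^{\mp\zeta|s_i-s_j|/a}}{2a\rho_0\zeta}+\frac{S\delta_{ij}}{K_j+\zeta^2M_j}\Big),\qquad \pm\mathrm{Re}\,\zeta>0.$$ Then for every $\lambda\in i\mathbb R\setminus\{0\}$ the matrices $$\Gamma_\pm(\lambda)^{-1}:=\lim_{\varepsilon\downarrow0}\Gamma(\lambda\pm\varepsilon)^{-1}$$ are well defined. *)

From HB Require Import structures.
From mathcomp Require Import all_boot all_order all_algebra.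
From mathcomp Require Import complex.
From mathcomp Require Import all_classical all_reals all_analysis.
Set Implicit Arguments. Unset Strict Implicit. Unset Printing Implicit Defensive.
Import Order.TTheory GRing.Theory Num.Theory.
Import numFieldNormedType.Exports.
Local Open Scope ring_scope.
Local Open Scope classical_set_scope.

Definition rc {R : realType} (x : R) : R[i] := Complex x 0.

Definition cexp {R : realType} (z : R[i]) : R[i] :=
  rc (expR (complex.Re z)) * Complex (cos (complex.Im z)) (sin (complex.Im z)).

(* The matrix Gamma(zeta), for Re zeta <> 0; the sign "±" is + when Re zeta > 0
   and - when Re zeta < 0 (the value for Re zeta = 0 is irrelevant). *)
Definition Gamma {R : realType} (n : nat) (s : 'I_n -> R) (a rho0 S : R)
  (K M : 'I_n -> R) (zeta : R[i]) : 'M[R[i]]_n :=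
  let sg : R[i] := if 0 < complex.Re zeta then 1 else -1 in
  \matrix_(i, j)
    (- zeta * (sg * cexp (- sg * zeta * rc (`|s i - s j| / a))
                  / (rc (2 * a * rho0) * zeta)
               + rc S * (i == j)%:R / (rc (K j) + zeta ^+ 2 * rc (M j)))).

Definition inv_limit_exists {R : realType} (n : nat) (G : R -> 'M[R[i]]_n) : Prop :=
  (\forall e \near 0^'+, G e \in unitmx) /\
  exists L : 'M[R[i]]_n, forall i j,
    ((fun e => complex.Re (invmx (G e) i j)) @ 0^'+ --> complex.Re (L i j)) /\
    ((fun e => complex.Im (invmx (G e) i j)) @ 0^'+ --> complex.Im (L i j)).

(* Write Gamma(zeta) = N(zeta) D(zeta)^-1 with D(zeta) = diag (K_j + zeta^2 M_j).  The
   numerator N is continuous up to zeta = lambda = i t, even where D(lambda) is singular,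
   so Gamma(lambda +- e)^-1 = D N^-1 converges as soon as N(lambda) is invertible.
   Up to a nonzero real factor, N(lambda)^T = P E - kappa with P = D(lambda) real diagonal,
   E_jl = exp (i k |s_j - s_l|) for a real k, and kappa nonzero and purely imaginary.
   If v P E = kappa v, put w = v P and z_j = exp (i k s_j).  Since E + E^* has entries
   z_j z_l^* + z_j^* z_l, the real part of the form w E w^* is |sum w_j z_j|^2 +
   |sum w_j z_j^*|^2; it is also the real part of kappa sum P_j |v_j|^2, i.e. zero.  So
   sum w_j z_j = 0, and at the leftmost point s_m of the support of w this makes
   (w E)_m = z_m^* sum w_j z_j vanish, whence v_m = 0 = w_m: so w = 0 and then v = 0. *)

From HB Require Import structures.
From mathcomp Require Import all_boot all_order all_algebra.
From mathcomp Require Import complex.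
From mathcomp Require Import all_classical all_reals all_analysis.
From mathcomp Require Import ring.
Import Order.TTheory GRing.Theory Num.Theory.
Import numFieldNormedType.Exports.
Local Open Scope ring_scope.
Local Open Scope classical_set_scope.

Section MatrixConvergence.
Context {K : numFieldType} {T : Type} {F : set_system T} {FF : Filter F}.

Lemma cvg_det {n : nat} {A : T -> 'M[K]_n} {A0 : 'M[K]_n} :
  (forall i j, A x i j @[x --> F] --> A0 i j) -> \det (A x) @[x --> F] --> \det A0.
Proof.
move=> cvgA; apply: cvg_big => [|s _]; first exact: add_continuous.
apply: cvgM; first exact: cvg_cst.
by apply: cvg_big => [|i _]; [exact: mul_continuous | exact: cvgA].
Qed.

Lemma cvg_adj {n : nat} {A : T -> 'M[K]_n} {A0 : 'M[K]_n} :
  (forall i j, A x i j @[x --> F] --> A0 i j) ->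
  forall i j, \adj (A x) i j @[x --> F] --> \adj A0 i j.
Proof.
move=> cvgA i j; rewrite mxE /cofactor; under eq_fun do rewrite mxE /cofactor.
apply: cvgM; first exact: cvg_cst.
by apply: cvg_det => k l; rewrite !mxE; under eq_fun do rewrite !mxE; exact: cvgA.
Qed.

Lemma cvg_invmx {n : nat} {A : T -> 'M[K]_n} {A0 : 'M[K]_n} :
  (forall i j, A x i j @[x --> F] --> A0 i j) -> A0 \in unitmx ->
  forall i j, invmx (A x) i j @[x --> F] --> invmx A0 i j.
Proof.
move=> cvgA A0unit i j.
have detA0 : \det A0 != 0 by rewrite -unitfE -unitmxE.
have detA : \forall x \near F, \det (A x) != 0 := cvgr_neq0 _ (cvg_det cvgA) detA0.
rewrite /invmx A0unit mxE.
apply: cvg_trans (cvgM (cvgV detA0 (cvg_det cvgA)) (cvg_adj cvgA i j)).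
apply: near_eq_cvg; near=> x.
have unitAx : A x \in unitmx by rewrite unitmxE unitfE; near: x; exact: detA.
by rewrite /= unitAx !mxE.
Unshelve. all: by end_near.
Qed.

Lemma cvg_mulmx {n : nat} {A B : T -> 'M[K]_n} {A0 B0 : 'M[K]_n} :
  (forall i j, A x i j @[x --> F] --> A0 i j) ->
  (forall i j, B x i j @[x --> F] --> B0 i j) ->
  forall i j, (A x *m B x) i j @[x --> F] --> (A0 *m B0) i j.
Proof.
move=> cvgA cvgB i j; rewrite mxE; under eq_fun do rewrite mxE.
by apply: cvg_big => [|k _]; [exact: add_continuous | exact: cvgM].
Qed.

End MatrixConvergence.

Section ComplexConvergence.
Context {R : realType}.
Local Notation C := (R[i] : numFieldType).
Local Open Scope complex_scope.

Lemma normc_ge_Im (x : R[i]) : `|complex.Im x|%:C <= `|x|.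
Proof.
by case: x => a b; simpc; rewrite -sqrtr_sqr ler_wsqrtr // lerDr sqr_ge0.
Qed.

Lemma normc_le_ReIm (x : R[i]) : `|x| <= (`|complex.Re x| + `|complex.Im x|)%:C.
Proof.
case: x => a b; simpc; rewrite /= -[X in _ <= X]ger0_norm ?addr_ge0 //.
rewrite -sqrtr_sqr ler_wsqrtr //.
by rewrite sqrrD !real_normK ?num_real // -addrA lerD2l lerDr mulrn_wge0 ?mulr_ge0.
Qed.

Lemma rc_neq0 (x : R) : x != 0 -> rc x != 0.
Proof. by apply: contraNneq => -[->]. Qed.

Context {T : Type} {F : set_system T} {FF : Filter F}.

Lemma cvg_complexP (f : T -> C) (z : C) :
  f x @[x --> F] --> z <->
  (complex.Re (f x) @[x --> F] --> complex.Re z /\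
   complex.Im (f x) @[x --> F] --> complex.Im z).
Proof.
split.
- move=> /cvgrPdist_lt fz; split; apply/cvgrPdist_lt => eps eps0;
    (have /fz : 0 < eps%:C :> C by rewrite ltcR);
    apply: filterS => x /(le_lt_trans _) lt; rewrite -ltcR; apply: lt.
  + by have := normc_ge_Re (z - f x); case: (z) (f x) => ? ? [? ?].
  + by have := normc_ge_Im (z - f x); case: (z) (f x) => ? ? [? ?].
- move=> [/cvgrPdist_lt fRe /cvgrPdist_lt fIm]; apply/cvgrPdist_lt => eps.
  case: eps => r ? /[!ltcE] /= /andP[/eqP -> r0].
  near=> x; apply: le_lt_trans (normc_le_ReIm _) _.
  rewrite ltcR [r]splitr ltrD //.
  - by rewrite (raddfB (@complex.Re R)); near: x; exact/fRe/divr_gt0.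
  - by rewrite (raddfB (@complex.Im R)); near: x; exact/fIm/divr_gt0.
Unshelve. all: by end_near.
Qed.

Lemma cvg_cexp {f : T -> C} {z : C} :
  f x @[x --> F] --> z -> cexp (f x) @[x --> F] --> (cexp z : C).
Proof.
move=> /cvg_complexP[fRe fIm]; apply: cvgM; apply/cvg_complexP; split => /=.
- exact: continuous_cvg (@continuous_expR R _) fRe.
- exact: cvg_cst.
- exact: continuous_cvg (@continuous_cos R _) fIm.
- exact: continuous_cvg (@continuous_sin R _) fIm.
Qed.

End ComplexConvergence.

Section ExpiDistanceMatrix.
Context {R : realType}.

Definition expi (x : R) : R[i] := Complex (cos x) (sin x).

Lemma expiD (x y : R) : expi (x + y) = expi x * expi y.
Proof. by rewrite /expi cosD sinD; simpc; rewrite [sin x * _ + _]addrC. Qed.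

Lemma cexp_imag (y : R) : cexp (Complex 0 y) = expi y.
Proof. by rewrite /cexp /= expR0 /expi; simpc. Qed.

Lemma conj_expi (x : R) : (expi x)^* = expi (- x).
Proof. by rewrite /expi cosN sinN. Qed.

Context {n : nat}.
Variables (s : 'I_n -> R) (k : R).

Definition expi_dist_mx : 'M[R[i]]_n := \matrix_(i, j) expi (k * `|s i - s j|).

Local Notation E := expi_dist_mx.
Local Notation z i := (expi (k * s i)).

Lemma expi_dist_mxC i j : E i j = E j i.
Proof. by rewrite !mxE distrC. Qed.

Lemma expi_dist_mx_le i j : s i <= s j -> E i j = (z i)^* * z j.
Proof.
move=> le_ij; rewrite mxE distrC ger0_norm ?subr_ge0 // conj_expi -expiD.
by rewrite mulrBr addrC.
Qed.

Lemma expi_dist_mxDconj i j : E i j + (E i j)^* = z i * (z j)^* + (z i)^* * z j.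
Proof.
have [le_ij | /ltW le_ji] := leP (s i) (s j).
  by rewrite expi_dist_mx_le // rmorphM /= conjCK addrC mulrC.
by rewrite expi_dist_mxC expi_dist_mx_le // rmorphM /= conjCK mulrC [z j * _]mulrC.
Qed.

Lemma expi_dist_form_re (w : 'I_n -> R[i]) :
  let q := \sum_i \sum_j w i * E i j * (w j)^* in
  let X := \sum_i w i * z i in
  let Y := \sum_i w i * (z i)^* in
  q + q^* = X * X^* + Y * Y^*.
Proof.
move=> q X Y.
have -> : q^* = \sum_i \sum_j w i * (E i j)^* * (w j)^*.
  rewrite rmorph_sum exchange_big; apply: eq_bigr => j _.
  rewrite rmorph_sum; apply: eq_bigr => i _.
  by rewrite !rmorphM /= conjCK expi_dist_mxC mulrC [_^* * _]mulrC mulrA.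
rewrite /q /X /Y !rmorph_sum !mulr_suml -!big_split; apply: eq_bigr => i _ /=.
rewrite !mulr_sumr -!big_split; apply: eq_bigr => j _ /=.
rewrite -mulrDl -mulrDr expi_dist_mxDconj !rmorphM /= conjCK.
ring.
Qed.

Lemma expi_dist_leftmost {w : 'I_n -> R[i]} {j} :
  \sum_i w i * z i = 0 -> w j != 0 ->
  exists2 m, w m != 0 & \sum_i w i * E i m = 0.
Proof.
move=> X0 wj0; have [m wm0 min_m] := arg_minP (P := fun i => w i != 0) s wj0.
exists m => //; transitivity ((z m)^* * \sum_i w i * z i); last by rewrite X0 mulr0.
rewrite mulr_sumr; apply: eq_bigr => i _.
have [->|wi0] := eqVneq (w i) 0; first by rewrite !mul0r mulr0.
by rewrite expi_dist_mxC expi_dist_mx_le ?min_m // mulrCA mulrA.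
Qed.

Lemma expi_dist_no_imag_eigenvalue {d : 'rV[R[i]]_n} {kappa : R[i]} :
  (forall j, d 0 j \is Num.real) -> kappa^* = - kappa -> kappa != 0 ->
  ~~ eigenvalue (diag_mx d *m E) kappa.
Proof.
move=> d_real kappaI kappa0; apply/eigenvalueP => -[v eig_v v0].
pose w i := v 0 i * d 0 i.
have eigE j : \sum_i w i * E i j = kappa * v 0 j.
  move/rowP/(_ j): eig_v; rewrite mulmxA mul_mx_diag !mxE => <-.
  by apply: eq_bigr => i _; rewrite mxE.
have X0 : \sum_i w i * z i = 0.
  pose Q := \sum_j v 0 j * (w j)^*.
  have QE : \sum_i \sum_j w i * E i j * (w j)^* = kappa * Q.
    rewrite exchange_big mulr_sumr; apply: eq_bigr => j _.
    by rewrite -mulr_suml eigE mulrA.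
  have Q_real : Q^* = Q.
    rewrite rmorph_sum; apply: eq_bigr => j _.
    by rewrite /w !rmorphM /= conjCK !(CrealP (d_real j)) mulrCA.
  have /= := expi_dist_form_re w; rewrite QE rmorphM /= Q_real kappaI mulNr addrN.
  move/esym/eqP; rewrite paddr_eq0 ?mul_conjC_ge0 // !mul_conjC_eq0.
  by case/andP => /eqP.
have w0 j : w j = 0.
  apply/eqP/negP => /negP /(expi_dist_leftmost X0) [m wm0].
  rewrite eigE => /eqP; rewrite mulf_eq0 (negbTE kappa0) => /eqP vm0.
  by move: wm0; rewrite /w vm0 mul0r eqxx.
apply/negP: v0; apply/negPn/eqP/rowP => j; rewrite mxE.
have := eigE j; rewrite big1 => [/esym/eqP|i _]; last by rewrite w0 mul0r.
by rewrite mulf_eq0 (negbTE kappa0) => /eqP.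
Qed.

End ExpiDistanceMatrix.

Section InverseLimit.
Context {R : realType}.
Local Notation C := (R[i] : numFieldType).

Lemma inv_limit_exists_of_factor {n} {G H D : R -> 'M[R[i]]_n} {H0 D0 : 'M[R[i]]_n} :
  (\forall e \near 0^'+, G e *m D e = H e) ->
  (forall i j, H e i j @[e --> 0^'+] --> (H0 i j : C)) ->
  (forall i j, D e i j @[e --> 0^'+] --> (D0 i j : C)) ->
  H0 \in unitmx -> inv_limit_exists G.
Proof.
move=> GDH cvgH cvgD H0unit.
have detH : \forall e \near 0^'+, \det (H e) != 0.
  by apply: cvgr_neq0 (cvg_det cvgH) _; rewrite -unitfE -unitmxE.
have invG : \forall e \near 0^'+, G e \in unitmx /\ invmx (G e) = D e *m invmx (H e).
  near=> e; have GD : G e *m D e = H e by near: e.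
  have Hu : H e \in unitmx by rewrite unitmxE unitfE; near: e.
  have GY : G e *m (D e *m invmx (H e)) = 1%:M by rewrite mulmxA GD mulmxV.
  have [Gu _] := mulmx1_unit GY.
  by split => //; rewrite -[LHS]mulmx1 -GY mulKmx.
split; first by apply: filterS invG => e [].
exists (D0 *m invmx H0) => i j; apply/cvg_complexP.
apply: cvg_trans (cvg_mulmx cvgD (cvg_invmx cvgH H0unit) i j).
apply: near_eq_cvg; near=> e.
by have [_ ->] : G e \in unitmx /\ invmx (G e) = D e *m invmx (H e) by near: e.
Unshelve. all: by end_near.
Qed.

Lemma cvg_at_right_line (sg t : R) :
  Complex (sg * e) t @[e --> 0^'+] --> (Complex 0 t : C).
Proof.
apply/cvg_complexP; split => /=; last exact: cvg_cst.
have : sg * e @[e --> 0^'+] --> sg * 0.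
  by apply: cvgM; [exact: cvg_cst | exact: cvg_at_right_filter].
by rewrite mulr0.
Qed.

End InverseLimit.

Section Gamma.
Variables (R : realType) (n : nat) (s : 'I_n -> R) (a rho0 S : R) (K M : 'I_n -> R).
Hypotheses (a_gt0 : 0 < a) (rho0_gt0 : 0 < rho0) (S_gt0 : 0 < S) (M_gt0 : forall j, 0 < M j).
Variable sg : R.
Hypothesis sg_pm : sg = 1 \/ sg = -1.
Local Notation C := (R[i] : numFieldType).

Definition Gamma_den (zeta : R[i]) : 'rV[R[i]]_n :=
  \row_j (rc (K j) + zeta ^+ 2 * rc (M j)).

(* The sign of [Re zeta] in [Gamma] is frozen to [sg], so that [Gamma_num] is continuous
   across the imaginary axis. *)
Definition Gamma_num (zeta : R[i]) : 'M[R[i]]_n :=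
  \matrix_(i, j) (- rc sg / rc (2 * a * rho0)
                     * cexp (- rc sg * zeta * rc (`|s i - s j| / a)) * Gamma_den zeta 0 j
                   - zeta * rc S * (i == j)%:R).

Lemma Gamma_den_neq0 (zeta : R[i]) j :
  complex.Re zeta != 0 -> complex.Im zeta != 0 -> Gamma_den zeta 0 j != 0.
Proof.
move=> Re0 Im0; rewrite mxE; apply: contraNneq Im0 => /(congr1 (@complex.Im R)).
case: zeta Re0 => x y /= x0; rewrite mulr0 !add0r [y * x]mulrC -mulr2n => /eqP.
by rewrite mulf_eq0 (gt_eqF (M_gt0 j)) orbF mulrn_eq0 mulf_eq0 (negbTE x0) /=.
Qed.

Lemma Gamma_mul_den (zeta : R[i]) :
  0 < sg * complex.Re zeta -> complex.Im zeta != 0 ->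
  Gamma s a rho0 S K M zeta *m diag_mx (Gamma_den zeta) = Gamma_num zeta.
Proof.
move=> Re_sg Im0.
have Re0 : complex.Re zeta != 0 by apply: contraTneq Re_sg => ->; rewrite mulr0 ltxx.
have zeta0 : zeta != 0 by apply: contraNneq Re0 => ->.
have sgE : (if 0 < complex.Re zeta then 1 else -1) = rc sg.
  by case: sg_pm Re_sg => ->;
    [rewrite mul1r => -> | rewrite mulN1r oppr_gt0 => /lt_gtF ->; simpc].
have c0 : rc (2 * a * rho0) != 0 by rewrite rc_neq0 // !mulf_neq0 ?gt_eqF.
apply/matrixP => i j; rewrite mul_mx_diag !mxE sgE.
have := Gamma_den_neq0 zeta j Re0 Im0; rewrite mxE => den0.
by field; rewrite den0 zeta0 c0.
Qed.

Lemma Gamma_num_imag_unit (t : R) : t != 0 -> Gamma_num (Complex 0 t) \in unitmx.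
Proof.
move=> t0; set c := - rc sg / rc (2 * a * rho0).
have sg0 : sg != 0 by case: sg_pm => ->; rewrite ?oppr_eq0 oner_eq0.
have c0 : c != 0 by rewrite mulf_neq0 ?oppr_eq0 ?invr_eq0 ?rc_neq0 // !mulf_neq0 ?gt_eqF.
have c_real : c^* = c by apply/CrealP; rewrite rpredM ?rpredN ?rpredV ?complex_real.
pose d := Gamma_den (Complex 0 t).
have d_real j : d 0 j \is Num.real by rewrite mxE expr2; simpc; rewrite complex_real.
set kappa := Complex 0 t * rc S / c.
have kappaI : kappa^* = - kappa.
  rewrite !rmorphM fmorphV /= c_real (CrealP (_ : rc S \is Num.real)) ?complex_real //.
  by rewrite -!mulNr; congr (_ * _ * _); simpc.
have kappa0 : kappa != 0.
  rewrite !mulf_neq0 ?invr_eq0 ?rc_neq0 ?(gt_eqF S_gt0) //.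
  by apply: contraNneq t0 => -[->].
have := expi_dist_no_imag_eigenvalue s (- (sg * t / a)) d_real kappaI kappa0.
rewrite /eigenvalue /eigenspace negbK kermx_eq0 row_free_unit => unit_eig.
suff -> : Gamma_num (Complex 0 t) =
    (c *: (diag_mx d *m expi_dist_mx s (- (sg * t / a)) - kappa%:M))^T.
  by rewrite unitmx_tr unitmxZ ?unitfE.
rewrite mul_diag_mx; apply/matrixP => i j; rewrite !mxE [j == i]eq_sym -cexp_imag.
have -> : Complex 0 (- (sg * t / a) * `|s j - s i|) =
    - rc sg * Complex 0 t * rc (`|s i - s j| / a).
  by rewrite distrC; simpc; rewrite mulrAC -mulrA.
by rewrite /kappa -/c; case: (i == j); rewrite ?mulr0n ?mulr1n; field.
Qed.

Section GammaConvergence.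
Context {T : Type} {F : set_system T} {FF : Filter F}.

Lemma cvg_Gamma_den {f : T -> C} {z : C} j :
  f x @[x --> F] --> z -> Gamma_den (f x) 0 j @[x --> F] --> (Gamma_den z 0 j : C).
Proof.
move=> fz; rewrite mxE; under eq_fun do rewrite mxE.
apply: (@cvgD _ C); first exact: cvg_cst.
by apply: cvgM; [rewrite expr2; under eq_fun do rewrite expr2; exact: cvgM | exact: cvg_cst].
Qed.

Lemma cvg_diag_Gamma_den {f : T -> C} {z : C} :
  f x @[x --> F] --> z ->
  forall i j, diag_mx (Gamma_den (f x)) i j @[x --> F] --> (diag_mx (Gamma_den z) i j : C).
Proof.
move=> fz i j; rewrite mxE; under eq_fun do rewrite mxE.
by apply: (@cvgMn _ C); exact: cvg_Gamma_den.
Qed.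

Lemma cvg_Gamma_num {f : T -> C} {z : C} :
  f x @[x --> F] --> z -> forall i j, Gamma_num (f x) i j @[x --> F] --> (Gamma_num z i j : C).
Proof.
move=> fz i j; rewrite mxE; under eq_fun do rewrite mxE.
apply: (@cvgB _ C).
  apply: (@cvgM C); last exact: cvg_Gamma_den.
  apply: (@cvgM C); first exact: cvg_cst.
  apply: cvg_cexp; apply: (@cvgM C); last exact: cvg_cst.
  by apply: (@cvgM C); first exact: cvg_cst.
apply: (@cvgM C); last exact: cvg_cst.
by apply: (@cvgM C); last exact: cvg_cst.
Qed.

End GammaConvergence.

Lemma Gamma_inv_limit (zeta : R -> R[i]) (t : R) :
  t != 0 -> (forall e, zeta e = Complex (sg * e) t) ->
  inv_limit_exists (fun e => Gamma s a rho0 S K M (zeta e)).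
Proof.
move=> t0 zetaE; have zeta_cvg := cvg_at_right_line sg t.
apply: (inv_limit_exists_of_factor _ (cvg_Gamma_num zeta_cvg) (cvg_diag_Gamma_den zeta_cvg)
  (Gamma_num_imag_unit _ t0)).
near=> e; have e_gt0 : 0 < e by near: e; exact: nbhs_right_gt.
have Re_sg : 0 < sg * complex.Re (Complex (sg * e) t).
  by rewrite /= mulrA; case: sg_pm => ->; rewrite ?mulrNN !mul1r.
by rewrite zetaE; apply: Gamma_mul_den.
Unshelve. all: by end_near.
Qed.

End Gamma.

Arguments Gamma_inv_limit {R n s a rho0 S K M} _ _ _ _ sg _ {zeta t}.

Theorem mainTheorem2 (R : realType) (n : nat) (hn : (0 < n)%N)
  (s : 'I_n -> R) (hs : injective s) (a rho0 S : R) (K M : 'I_n -> R)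
  (ha : 0 < a) (hrho0 : 0 < rho0) (hS : 0 < S)
  (hK : forall j, 0 < K j) (hM : forall j, 0 < M j)
  (t : R) (ht : t != 0) :
  let lambda : R[i] := Complex 0 t in
  inv_limit_exists (fun e : R => Gamma s a rho0 S K M (lambda + rc e)) /\
  inv_limit_exists (fun e : R => Gamma s a rho0 S K M (lambda - rc e)).
Proof.
move=> lambda; split.
- by apply: (Gamma_inv_limit ha hrho0 hS hM 1 (or_introl erefl) ht) => e; simpc.
- by apply: (Gamma_inv_limit ha hrho0 hS hM (-1) (or_intror erefl) ht) => e; simpc.
Qed.
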